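(* Let $\mathfrak{k}_1\subset\mathbb{C}^{N_1\times N_1}$ and $\mathfrak{k}_2\subset\mathbb{C}^{N_2\times N_2}$ be the (real) Lie algebras of Lie subgroups $K_1,K_2$ of matrices, and let $\mathfrak{t}_1,\mathfrak{t}_2$ be torus algebras of $\mathfrak{k}_1$ and $\mathfrak{k}_2$, respectively. Then $\mathfrak{t}_1\widehat{\oplus}\mathfrak{t}_2$ is a torus algebra of $\mathfrak{k}_1\widehat{\oplus}\mathfrak{k}_2$. If moreover $\mathfrak{k}_1\subset sl_{\mathbb{C}}(N_1)$ and $\mathfrak{k}_2\subset sl_{\mathbb{C}}(N_2)$, then the converse holds: if $\mathfrak{t}_1\subset\mathfrak{k}_1$ and $\mathfrak{t}_2\subset\mathfrak{k}_2$ are Lie subalgebras such that $\mathfrak{t}_1\widehat{\oplus}\mathfrak{t}_2$ is a torus algebra of $\mathfrak{k}_1\widehat{\oplus}\mathfrak{k}_2$, then $\mathfrak{t}_1$ and $\mathfrak{t}_2$ are torus algebras of $\mathfrak{k}_1$ and $\mathfrak{k}_2$.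
   Context: A torus algebra of a Lie algebra is a maximal Abelian subalgebra. For subspaces $\mathfrak{a}_1\subset\mathbb{C}^{N_1\times N_1}$, $\mathfrak{a}_2\subset\mathbb{C}^{N_2\times N_2}$, $\mathfrak{a}_1\widehat{\oplus}\mathfrak{a}_2=\{\Omega_1\otimes I_{N_2}+I_{N_1}\otimes\Omega_2\mid \Omega_1\in\mathfrak{a}_1,\Omega_2\in\mathfrak{a}_2\}$; $\mathfrak{k}_1\widehat{\oplus}\mathfrak{k}_2$ is the Lie algebra of $K_1\otimes K_2=\{U_1\otimes U_2\}$. $sl_{\mathbb{C}}(N)$ is the set of all $A\in\mathbb{C}^{N\times N}$ with $\mathrm{tr}\,A=0$. *)

From HB Require Import structures.
From mathcomp Require Import all_boot all_order all_algebra.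
From mathcomp Require Import complex mxtens.
Set Implicit Arguments. Unset Strict Implicit. Unset Printing Implicit Defensive.
Import Order.TTheory GRing.Theory Num.Theory.
Local Open Scope ring_scope.

(* Complex numbers are modelled as R[i] for an arbitrary real closed field R
   (R = the reals gives C).  Subsets of matrix spaces are predicates in Prop. *)

Definition mxset (R : rcfType) (N : nat) := 'M[R[i]]_N -> Prop.

Definition mxsubset (R : rcfType) (N : nat) (S T : mxset R N) :=
  forall A, S A -> T A.

Definition real_subspace (R : rcfType) (N : nat) (S : mxset R N) :=
  [/\ S 0,
      (forall A B, S A -> S B -> S (A + B)) &
      (forall (r : R) A, S A -> S ((real_complex R r) *: A))].

Definition lie_bracket (R : rcfType) (N : nat) (A B : 'M[R[i]]_N) :=
  A *m B - B *m A.

Definition lie_subalgebra (R : rcfType) (N : nat) (S : mxset R N) :=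
  real_subspace S /\ (forall A B, S A -> S B -> S (lie_bracket A B)).

Definition abelian_set (R : rcfType) (N : nat) (S : mxset R N) :=
  forall A B, S A -> S B -> lie_bracket A B = 0.

Definition torus_algebra (R : rcfType) (N : nat) (t k : mxset R N) :=
  [/\ lie_subalgebra t, mxsubset t k, abelian_set t &
      (forall t' : mxset R N, lie_subalgebra t' -> abelian_set t' ->
          mxsubset t t' -> mxsubset t' k -> mxsubset t' t)].

Definition hat_sum (R : rcfType) (N1 N2 : nat) (a1 : mxset R N1) (a2 : mxset R N2)
  : mxset R (N1 * N2) :=
  fun M => exists O1 O2, [/\ a1 O1, a2 O2 &
     M = O1 *t (1%:M : 'M[R[i]]_N2) + (1%:M : 'M[R[i]]_N1) *t O2].

Definition in_sl (R : rcfType) (N : nat) (k : mxset R N) :=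
  forall A, k A -> \tr A = 0.

From HB Require Import structures.
From mathcomp Require Import all_boot all_order all_algebra.
From mathcomp Require Import complex mxtens.
From mathcomp Require Import ring.
Set Implicit Arguments. Unset Strict Implicit. Unset Printing Implicit Defensive.
Import Order.TTheory GRing.Theory Num.Theory.
Local Open Scope ring_scope.

(* Writing A (+) B for the Kronecker sum A (x) 1 + 1 (x) B, we have
   [A1 (+) A2, B1 (+) B2] = [A1, B1] (+) [A2, B2], so hat sums of Abelian
   algebras are Abelian.  An element O1 (+) O2 of an Abelian algebra containing
   t1 (+) t2 commutes with every a (+) 0, a in t1, hence O1 centralizes t1 and
   lies in t1 by maximality; likewise for O2.  Conversely, an Abelian t1' above
   t1 gives the Abelian t1' (+) t2 above t1 (+) t2.  The kernel of (+) consists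
   of the pairs (c 1, -c 1), so the trace condition makes (+) injective, which
   lets one read off the components. *)

Section KroneckerSum.
Variables (R : comPzRingType) (m n : nat).

Definition kron_sum (A : 'M[R]_m) (B : 'M[R]_n) : 'M[R]_(m * n) :=
  A *t 1%:M + 1%:M *t B.

Lemma kron_sum0 : kron_sum 0 0 = 0.
Proof. by apply/matrixP=> i j; rewrite !mxE; ring. Qed.

Lemma kron_sumD A1 A2 B1 B2 :
  kron_sum (A1 + B1) (A2 + B2) = kron_sum A1 A2 + kron_sum B1 B2.
Proof. by apply/matrixP=> i j; rewrite !mxE; ring. Qed.

Lemma kron_sumB A1 A2 B1 B2 :
  kron_sum (A1 - B1) (A2 - B2) = kron_sum A1 A2 - kron_sum B1 B2.
Proof. by apply/matrixP=> i j; rewrite !mxE; ring. Qed.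

Lemma kron_sumZ c A B : kron_sum (c *: A) (c *: B) = c *: kron_sum A B.
Proof. by apply/matrixP=> i j; rewrite !mxE; ring. Qed.

Lemma kron_sum_commutator A1 A2 B1 B2 :
  kron_sum A1 A2 *m kron_sum B1 B2 - kron_sum B1 B2 *m kron_sum A1 A2 =
  kron_sum (A1 *m B1 - B1 *m A1) (A2 *m B2 - B2 *m A2).
Proof.
rewrite /kron_sum !mulmxDl !mulmxDr !tensmx_mul !mulmx1 !mul1mx.
by apply/matrixP=> i j; rewrite !mxE; ring.
Qed.

Lemma kron_sum_eq0 A B : (0 < m)%N -> (0 < n)%N ->
  kron_sum A B = 0 -> exists c, A = c%:M /\ B = - c%:M.
Proof.
move=> m_gt0 n_gt0 /matrixP AB0; pose i0 := Ordinal m_gt0; pose j0 := Ordinal n_gt0.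
have AB i j k l : A i k * (j == l)%:R + (i == k)%:R * B j l = 0.
  by have := AB0 (mxtens_index (i, j)) (mxtens_index (k, l)); rewrite mxE !tensmxE !mxE.
exists (A i0 i0); split; apply/matrixP=> i k; rewrite !mxE.
- have := AB i j0 k j0; rewrite eqxx mulr1 => /eqP; rewrite addr_eq0 => /eqP ->.
  have := AB i0 j0 i0 j0; rewrite !eqxx mulr1 mul1r => /addr0_eq <-.
  by case: (i =P k); rewrite ?mul1r ?mulr1n ?mul0r ?mulr0n ?opprK ?oppr0.
- have := AB i0 i i0 k; rewrite eqxx mul1r => /addr0_eq <-.
  by case: (i =P k); rewrite ?mulr1 ?mulr1n ?mulr0 ?mulr0n ?oppr0.
Qed.

End KroneckerSum.

Lemma comm_mxZ (R : comPzRingType) n (c : R) (A B : 'M[R]_n) :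
  comm_mx A B -> comm_mx A (c *: B).
Proof. by rewrite /comm_mx -scalemxAl -scalemxAr => ->. Qed.

Lemma matrix_dim0_eq (T : Type) p (M M' : 'M[T]_p) : p = 0%N -> M = M'.
Proof. by move=> p0; move: M M'; rewrite p0 => M M'; apply/matrixP=> -[]. Qed.

Section KroneckerSumInj.
Variables (R : numDomainType) (m n : nat).
Hypotheses (m_gt0 : (0 < m)%N) (n_gt0 : (0 < n)%N).

Lemma kron_sum_inj (A A' : 'M[R]_m) (B B' : 'M[R]_n) :
  kron_sum A B = kron_sum A' B' -> \tr A = \tr A' \/ \tr B = \tr B' ->
  A = A' /\ B = B'.
Proof.
move=> eqAB eq_tr.
have /(kron_sum_eq0 m_gt0 n_gt0) [c [Ac Bc]] : kron_sum (A - A') (B - B') = 0.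
  by rewrite kron_sumB eqAB subrr.
suff c0 : c = 0 by move: Ac Bc; rewrite c0 !raddf0 => /subr0_eq -> /subr0_eq ->.
case: eq_tr => /eqP; rewrite -subr_eq0 -raddfB /=.
  by rewrite Ac mxtrace_scalar mulrn_eq0 eqn0Ngt m_gt0 => /eqP.
by rewrite Bc raddfN /= mxtrace_scalar oppr_eq0 mulrn_eq0 eqn0Ngt n_gt0 => /eqP.
Qed.

Lemma kron_sum_injl (B : 'M[R]_n) : injective (fun A : 'M[R]_m => kron_sum A B).
Proof. by move=> A A' /kron_sum_inj inj; apply: (inj _).1; right. Qed.

Lemma kron_sum_injr (A : 'M[R]_m) : injective (fun B : 'M[R]_n => kron_sum A B).
Proof. by move=> B B' /kron_sum_inj inj; apply: (inj _).2; left. Qed.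

End KroneckerSumInj.

Section LieAlgebras.
Variables (R : rcfType) (N : nat).
Implicit Types (A B O : 'M[R[i]]_N) (S t k : mxset R N).

Lemma lie_bracket_eq0 A B : lie_bracket A B = 0 <-> comm_mx A B.
Proof.
by rewrite /lie_bracket /comm_mx; split=> [/eqP|->]; rewrite ?subrr // subr_eq0 => /eqP.
Qed.

Lemma lie_bracket0 A : lie_bracket A 0 = 0.
Proof. by rewrite /lie_bracket mulmx0 mul0mx subrr. Qed.

Lemma abelian_lie_subalgebra S :
  real_subspace S -> abelian_set S -> lie_subalgebra S.
Proof. by move=> sS abS; split=> // A B SA SB; rewrite abS //; case: sS. Qed.

Definition adjoin_mx t O : mxset R N :=
  fun X => exists a r, t a /\ X = a + real_complex R r *: O.

Lemma adjoin_mx_subspace t O : real_subspace t -> real_subspace (adjoin_mx t O).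
Proof.
case=> t0 tD tZ; split.
- by exists 0, 0; rewrite rmorph0 scale0r addr0.
- move=> _ _ [a [r [ta ->]]] [b [s [tb ->]]]; exists (a + b), (r + s).
  by rewrite rmorphD scalerDl addrACA; split=> //; apply: tD.
- move=> c _ [a [r [ta ->]]]; exists (real_complex R c *: a), (c * r).
  by rewrite scalerDr scalerA rmorphM; split=> //; apply: tZ.
Qed.

Lemma adjoin_mx_abelian t O :
  abelian_set t -> (forall a, t a -> comm_mx a O) -> abelian_set (adjoin_mx t O).
Proof.
move=> abt tO _ _ [a [r [ta ->]]] [b [s [tb ->]]]; apply/lie_bracket_eq0.
apply: comm_mxD; apply: comm_mx_sym; apply: comm_mxD.
- exact/lie_bracket_eq0/abt.
- exact/comm_mxZ/tO.
- exact/comm_mx_sym/comm_mxZ/tO.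
- exact/comm_mxZ/comm_mx_sym/comm_mxZ.
Qed.

Lemma torus_algebra_centralizer_mem t k O :
  torus_algebra t k -> real_subspace k -> k O ->
  (forall a, t a -> lie_bracket O a = 0) -> t O.
Proof.
move=> [[st _] tk abt maxt] sk kO Ot.
have [[t0 _ _] [_ kD kZ]] := (st, sk).
have tO a : t a -> comm_mx a O by move/Ot/lie_bracket_eq0/comm_mx_sym.
apply: (maxt (adjoin_mx t O)).
- by apply: abelian_lie_subalgebra; [apply: adjoin_mx_subspace | apply: adjoin_mx_abelian].
- exact: adjoin_mx_abelian.
- by move=> a ta; exists a, 0; rewrite rmorph0 scale0r addr0.
- by move=> _ [a [r [ta ->]]]; apply: kD; [apply: tk | apply: kZ].
- by exists 0, 1; rewrite rmorph1 scale1r add0r.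
Qed.

End LieAlgebras.

Section HatSum.
Variables (R : rcfType) (N1 N2 : nat).

Lemma hat_sum_mem (a1 : mxset R N1) (a2 : mxset R N2) A B :
  a1 A -> a2 B -> hat_sum a1 a2 (kron_sum A B).
Proof. by exists A, B. Qed.

Lemma hat_sum_subset (a1 b1 : mxset R N1) (a2 b2 : mxset R N2) :
  mxsubset a1 b1 -> mxsubset a2 b2 -> mxsubset (hat_sum a1 a2) (hat_sum b1 b2).
Proof. by move=> s1 s2 _ [A [B [aA aB ->]]]; apply: hat_sum_mem; [apply: s1 | apply: s2]. Qed.

Lemma lie_bracket_kron_sum (A1 B1 : 'M[R[i]]_N1) (A2 B2 : 'M[R[i]]_N2) :
  lie_bracket (kron_sum A1 A2) (kron_sum B1 B2) =
  kron_sum (lie_bracket A1 B1) (lie_bracket A2 B2).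
Proof. exact: kron_sum_commutator. Qed.

Lemma lie_subalgebra_hat_sum (a1 : mxset R N1) (a2 : mxset R N2) :
  lie_subalgebra a1 -> lie_subalgebra a2 -> lie_subalgebra (hat_sum a1 a2).
Proof.
move=> [[a10 D1 Z1] L1] [[a20 D2 Z2] L2]; split; [split|].
- by rewrite -kron_sum0; apply: hat_sum_mem.
- move=> _ _ [A1 [A2 [aA1 aA2 ->]]] [B1 [B2 [aB1 aB2 ->]]].
  by rewrite -kron_sumD; apply: hat_sum_mem; [apply: D1 | apply: D2].
- move=> r _ [A1 [A2 [aA1 aA2 ->]]].
  by rewrite -kron_sumZ; apply: hat_sum_mem; [apply: Z1 | apply: Z2].
- move=> _ _ [A1 [A2 [aA1 aA2 ->]]] [B1 [B2 [aB1 aB2 ->]]].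
  by rewrite lie_bracket_kron_sum; apply: hat_sum_mem; [apply: L1 | apply: L2].
Qed.

Lemma abelian_hat_sum (a1 : mxset R N1) (a2 : mxset R N2) :
  abelian_set a1 -> abelian_set a2 -> abelian_set (hat_sum a1 a2).
Proof.
move=> ab1 ab2 _ _ [A1 [A2 [aA1 aA2 ->]]] [B1 [B2 [aB1 aB2 ->]]].
by rewrite lie_bracket_kron_sum ab1 // ab2 // kron_sum0.
Qed.

Section PositiveDimensions.
Hypotheses (N1_gt0 : (0 < N1)%N) (N2_gt0 : (0 < N2)%N).

Lemma lie_bracket_kron_sum_eq0l (A1 B : 'M[R[i]]_N1) (A2 : 'M[R[i]]_N2) :
  lie_bracket (kron_sum A1 A2) (kron_sum B 0) = 0 -> lie_bracket A1 B = 0.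
Proof.
by rewrite lie_bracket_kron_sum lie_bracket0 -kron_sum0 => /(kron_sum_injl N1_gt0 N2_gt0).
Qed.

Lemma lie_bracket_kron_sum_eq0r (A1 : 'M[R[i]]_N1) (A2 B : 'M[R[i]]_N2) :
  lie_bracket (kron_sum A1 A2) (kron_sum 0 B) = 0 -> lie_bracket A2 B = 0.
Proof.
by rewrite lie_bracket_kron_sum lie_bracket0 -kron_sum0 => /(kron_sum_injr N1_gt0 N2_gt0).
Qed.

End PositiveDimensions.
End HatSum.

Section TorusAlgebras.
Variables (R : rcfType) (N1 N2 : nat).

Lemma torus_algebra_hat_sum (k1 t1 : mxset R N1) (k2 t2 : mxset R N2) :
  real_subspace k1 -> real_subspace k2 ->
  torus_algebra t1 k1 -> torus_algebra t2 k2 ->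
  torus_algebra (hat_sum t1 t2) (hat_sum k1 k2).
Proof.
move=> sk1 sk2 T1 T2; have [[lt1 tk1 abt1 _] [lt2 tk2 abt2 _]] := (T1, T2).
have [[[t10 _ _] _] [[t20 _ _] _]] := (lt1, lt2).
split; [exact: lie_subalgebra_hat_sum | exact: hat_sum_subset | exact: abelian_hat_sum |].
move=> t' _ abt' tt' t'k M t'M; have [O1 [O2 [kO1 kO2 defM']]] := t'k M t'M.
have defM : M = kron_sum O1 O2 := defM'.
have [N0 | ] := eqVneq (N1 * N2)%N 0%N.
  by rewrite (matrix_dim0_eq M (kron_sum 0 0) N0); apply: hat_sum_mem.
rewrite muln_eq0 negb_or -!lt0n => /andP[N1_gt0 N2_gt0].
have t'_mem A1 A2 : t1 A1 -> t2 A2 -> t' (kron_sum A1 A2).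
  by move=> tA1 tA2; apply/tt'/hat_sum_mem.
rewrite defM; apply: hat_sum_mem.
- apply: (torus_algebra_centralizer_mem T1 sk1 kO1) => a ta.
  apply: (lie_bracket_kron_sum_eq0l N1_gt0 N2_gt0 (A2 := O2)).
  by rewrite -defM; apply: abt' => //; apply: t'_mem.
- apply: (torus_algebra_centralizer_mem T2 sk2 kO2) => a ta.
  apply: (lie_bracket_kron_sum_eq0r N1_gt0 N2_gt0 (A1 := O1)).
  by rewrite -defM; apply: abt' => //; apply: t'_mem.
Qed.

Section Factors.
Variables (k1 t1 : mxset R N1) (k2 t2 : mxset R N2).
Hypotheses (N1_gt0 : (0 < N1)%N) (N2_gt0 : (0 < N2)%N).
Hypotheses (sl1 : in_sl k1) (sl2 : in_sl k2).
Hypotheses (lt1 : lie_subalgebra t1) (tk1 : mxsubset t1 k1).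
Hypotheses (lt2 : lie_subalgebra t2) (tk2 : mxsubset t2 k2).
Hypothesis T : torus_algebra (hat_sum t1 t2) (hat_sum k1 k2).

Let t10 : t1 0. Proof. by case: lt1 => -[]. Qed.
Let t20 : t2 0. Proof. by case: lt2 => -[]. Qed.

Lemma abelian_hat_sum_factorl : abelian_set t1.
Proof.
have [_ _ abT _] := T; move=> A B tA tB.
by apply: (lie_bracket_kron_sum_eq0l N1_gt0 N2_gt0 (A2 := 0)); apply: abT; apply: hat_sum_mem.
Qed.

Lemma abelian_hat_sum_factorr : abelian_set t2.
Proof.
have [_ _ abT _] := T; move=> A B tA tB.
by apply: (lie_bracket_kron_sum_eq0r N1_gt0 N2_gt0 (A1 := 0)); apply: abT; apply: hat_sum_mem.
Qed.

Lemma torus_algebra_hat_sum_factorl : torus_algebra t1 k1.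
Proof.
have [_ _ _ maxT] := T; have abt2 := abelian_hat_sum_factorr.
split=> // [|t' lt' abt' t1t' t'k1 X t'X]; first exact: abelian_hat_sum_factorl.
have sub : mxsubset (hat_sum t' t2) (hat_sum t1 t2).
  apply: maxT; [exact: lie_subalgebra_hat_sum | exact: abelian_hat_sum |
                exact: hat_sum_subset | exact: hat_sum_subset].
have [O1 [O2 [tO1 tO2 eqX]]] := sub _ (hat_sum_mem t'X t20).
have tr_O2 : \tr (0 : 'M_N2) = \tr O2 by rewrite mxtrace0 sl2 //; apply: tk2.
by have [-> _] := kron_sum_inj N1_gt0 N2_gt0 eqX (or_intror tr_O2).
Qed.

Lemma torus_algebra_hat_sum_factorr : torus_algebra t2 k2.
Proof.
have [_ _ _ maxT] := T; have abt1 := abelian_hat_sum_factorl.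
split=> // [|t' lt' abt' t2t' t'k2 X t'X]; first exact: abelian_hat_sum_factorr.
have sub : mxsubset (hat_sum t1 t') (hat_sum t1 t2).
  apply: maxT; [exact: lie_subalgebra_hat_sum | exact: abelian_hat_sum |
                exact: hat_sum_subset | exact: hat_sum_subset].
have [O1 [O2 [tO1 tO2 eqX]]] := sub _ (hat_sum_mem t10 t'X).
have tr_O1 : \tr (0 : 'M_N1) = \tr O1 by rewrite mxtrace0 sl1 //; apply: tk1.
by have [_ ->] := kron_sum_inj N1_gt0 N2_gt0 eqX (or_introl tr_O1).
Qed.

End Factors.
End TorusAlgebras.

Theorem lemma3p2 (R : rcfType) (N1 N2 : nat) (k1 : mxset R N1) (k2 : mxset R N2) :
  lie_subalgebra k1 -> lie_subalgebra k2 ->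
  (forall (t1 : mxset R N1) (t2 : mxset R N2),
      torus_algebra t1 k1 -> torus_algebra t2 k2 ->
      torus_algebra (hat_sum t1 t2) (hat_sum k1 k2)) /\
  ((0 < N1)%N -> (0 < N2)%N -> in_sl k1 -> in_sl k2 ->
   forall (t1 : mxset R N1) (t2 : mxset R N2),
      lie_subalgebra t1 -> mxsubset t1 k1 ->
      lie_subalgebra t2 -> mxsubset t2 k2 ->
      torus_algebra (hat_sum t1 t2) (hat_sum k1 k2) ->
      torus_algebra t1 k1 /\ torus_algebra t2 k2).
Proof.
move=> [sk1 _] [sk2 _]; split=> [t1 t2|N1_gt0 N2_gt0 sl1 sl2 t1 t2 lt1 tk1 lt2 tk2 T].
  exact: torus_algebra_hat_sum.
by split; [apply: torus_algebra_hat_sum_factorl T | apply: torus_algebra_hat_sum_factorr T].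
Qed.
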